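(* Let $(X,d)$ be a complete metric space endowed with a continuous $k$-mean $\mu$ that is weakly $\beta$-contractive. If $X$ is uniformly locally convex (with respect to $\mu$), then the barycentric operator $\beta$ of $\mu$ is power convergent, so that $\mu$ has a $\beta$-extension.
   Context: A $k$-mean is a map $\mu:X^k\to X$ with $\mu(x,\ldots,x)=x$. Barycentric operator: $\beta:X^{k+1}\to X^{k+1}$, $\beta(\mathbf{x})_j=\mu(x_1,\ldots,x_{j-1},x_{j+1},\ldots,x_{k+1})$. $\Delta(\mathbf{x})=\max_{i,j}d(x_i,x_j)$; $\mu$ is weakly $\beta$-contractive if $\Delta(\beta^n(\mathbf{x}))\to0$ for all $\mathbf{x}\in X^{k+1}$. A subset $C$ is convex if $\mu(x_1,\ldots,x_k)\in C$ whenever $x_1,\ldots,x_k\in C$; the convex hull of $A$ is the smallest convex set containing $A$. $X$ is uniformly locally convex if for each $\varepsilon>0$ there is $\delta>0$ such that the convex hull of any set $A$ of diameter less than $\delta$ has diameter less than $\varepsilon$. $\beta$ is power convergent if for each $\mathbf{x}$, $\beta^n(\mathbf{x})\to(x^*,\ldots,x^* )$ for some $x^*$; a $(k+1)$-mean $\nu$ is a $\beta$-extension of $\mu$ if $\beta^n(\mathbf{x})\to(\nu(\mathbf{x}),\ldots,\nu(\mathbf{x}))$ for all $\mathbf{x}$. *)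

From Stdlib Require Import Reals.
From mathcomp Require Import ssreflect ssrfun ssrbool eqtype ssrnat seq fintype bigop.
Set Implicit Arguments. Unset Strict Implicit. Unset Printing Implicit Defensive.
Open Scope R_scope.

Section MetricDefs.
Variables (X : Type) (d : X -> X -> R).

Definition is_metric : Prop :=
  (forall x y, 0 <= d x y) /\
  (forall x y, d x y = 0 <-> x = y) /\
  (forall x y, d x y = d y x) /\
  (forall x y z, d x z <= d x y + d y z).

Definition converges (u : nat -> X) (l : X) : Prop :=
  forall eps, 0 < eps -> exists N, forall n, (N <= n)%nat -> d (u n) l < eps.

Definition cauchy (u : nat -> X) : Prop :=
  forall eps, 0 < eps -> exists N, forall m n, (N <= m)%nat -> (N <= n)%nat ->
    d (u m) (u n) < eps.

Definition complete : Prop :=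
  forall u, cauchy u -> exists l, converges u l.

Definition is_mean (k : nat) (mu : ('I_k -> X) -> X) : Prop :=
  forall x : X, mu (fun _ => x) = x.

(* continuity of mu : X^k -> X, X^k with the product topology
   (equivalently, the max metric) *)
Definition continuous_mean (k : nat) (mu : ('I_k -> X) -> X) : Prop :=
  forall (x : 'I_k -> X) eps, 0 < eps -> exists delta, 0 < delta /\
    forall y : 'I_k -> X, (forall i, d (x i) (y i) < delta) -> d (mu x) (mu y) < eps.

(* barycentric operator beta : X^(k+1) -> X^(k+1),
   beta(x)_j = mu(x_1,..,x_(j-1),x_(j+1),..,x_(k+1)); [lift j] enumerates
   the indices different from j in increasing order. *)
Definition beta (k : nat) (mu : ('I_k -> X) -> X) (x : 'I_k.+1 -> X) : 'I_k.+1 -> X :=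
  fun j => mu (fun i => x (lift j i)).

Definition Delta (n : nat) (x : 'I_n -> X) : R :=
  \big[Rmax/0]_(i < n) \big[Rmax/0]_(j < n) d (x i) (x j).

Definition weakly_beta_contractive (k : nat) (mu : ('I_k -> X) -> X) : Prop :=
  forall x : 'I_k.+1 -> X, forall eps, 0 < eps -> exists N, forall n, (N <= n)%nat ->
    Rabs (Delta (iter n (beta mu) x)) < eps.

Definition convex_set (k : nat) (mu : ('I_k -> X) -> X) (C : X -> Prop) : Prop :=
  forall x : 'I_k -> X, (forall i, C (x i)) -> C (mu x).

Definition convex_hull (k : nat) (mu : ('I_k -> X) -> X) (A : X -> Prop) : X -> Prop :=
  fun z => forall C, convex_set mu C -> (forall a, A a -> C a) -> C z.

(* diam A < r, where diam A = sup { d x y | x, y in A } (in [0, +oo]) *)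
Definition diam_lt (A : X -> Prop) (r : R) : Prop :=
  exists s, s < r /\ forall x y, A x -> A y -> d x y <= s.

Definition uniformly_locally_convex (k : nat) (mu : ('I_k -> X) -> X) : Prop :=
  forall eps, 0 < eps -> exists delta, 0 < delta /\
    forall A : X -> Prop, diam_lt A delta -> diam_lt (convex_hull mu A) eps.

Definition power_convergent (k : nat) (mu : ('I_k -> X) -> X) : Prop :=
  forall x : 'I_k.+1 -> X, exists xs : X,
    forall j, converges (fun n => iter n (beta mu) x j) xs.

Definition beta_extension (k : nat) (mu : ('I_k -> X) -> X)
    (nu : ('I_k.+1 -> X) -> X) : Prop :=
  is_mean nu /\
  forall x : 'I_k.+1 -> X, forall j, converges (fun n => iter n (beta mu) x j) (nu x).

End MetricDefs.

From Pilot Require Import Defs.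
From Stdlib Require Import Reals Lra.
From Stdlib Require Import ClassicalEpsilon FunctionalExtensionality.
From mathcomp Require Import ssreflect ssrfun ssrbool eqtype ssrnat seq fintype bigop.
Open Scope R_scope.

(* Once [Delta (beta^N x) < delta], every entry of every later iterate lies in
   the convex hull of the entries of [beta^N x], a set of diameter [< delta];
   by uniform local convexity that hull has diameter [< eps].  So all entries
   of all iterates from [N] on are pairwise [eps]-close: each coordinate
   sequence is Cauchy, and they share one limit by completeness.  The limit
   map is a mean because constant tuples are fixed by [beta]. *)

Lemma le_bigmax_seq (T : eqType) (F : T -> R) (s : seq T) (x : T) :
  x \in s -> F x <= \big[Rmax/0]_(i <- s) F i.
Proof.
elim: s => [|a s IHs] //=.
rewrite in_cons big_cons => /orP [/eqP -> | x_in_s].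
- exact: Rmax_l.
- exact: Rle_trans (IHs x_in_s) (Rmax_r _ _).
Qed.

Lemma le_bigmax_ord {n} (F : 'I_n -> R) (i : 'I_n) : F i <= \big[Rmax/0]_(j < n) F j.
Proof. by apply: le_bigmax_seq; rewrite mem_index_enum. Qed.

Section MetricSpace.

Context {X : Type} {d : X -> X -> R}.

Lemma le_Delta n (x : 'I_n -> X) i j : d (x i) (x j) <= Defs.Delta d x.
Proof.
apply: Rle_trans (le_bigmax_ord (fun j => d (x i) (x j)) j) _.
exact: (le_bigmax_ord (fun i => \big[Rmax/0]_(j < n) d (x i) (x j)) i).
Qed.

Hypothesis d_metric : is_metric d.

Lemma converges_const_eq (c l : X) : converges d (fun _ => c) l -> l = c.
Proof.
case: d_metric => d_ge0 [d_eq0 _] conv_c.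
suff: d c l = 0 by move/d_eq0.
case: (Rle_lt_or_eq_dec _ _ (d_ge0 c l)) => // dcl_gt0.
have [N /(_ N (leqnn N))] := conv_c _ dcl_gt0; lra.
Qed.

Lemma converges_close (u v : nat -> X) (l : X) :
  converges d u l ->
  (forall eps, 0 < eps -> exists N, forall n, (N <= n)%nat -> d (v n) (u n) < eps) ->
  converges d v l.
Proof.
case: d_metric => _ [_ [_ d_tri]] conv_u close_vu eps eps_gt0.
have [N1 HN1] := close_vu (eps / 2) ltac:(lra).
have [N2 HN2] := conv_u (eps / 2) ltac:(lra).
exists (maxn N1 N2) => n; rewrite geq_max => /andP [le_N1n le_N2n].
have := d_tri (v n) (u n) l; have := HN1 n le_N1n; have := HN2 n le_N2n; lra.
Qed.

End MetricSpace.

Section BarycentricOperator.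

Context {X : Type} {k : nat} {mu : ('I_k -> X) -> X}.

Lemma convex_hull_convex (A : X -> Prop) : convex_set mu (convex_hull mu A).
Proof.
move=> y hull_y C C_convex A_C; apply: (C_convex) => i.
exact: hull_y i C C_convex A_C.
Qed.

Lemma subset_convex_hull (A : X -> Prop) a : A a -> convex_hull mu A a.
Proof. by move=> Aa C _; apply. Qed.

Lemma iter_beta_convex (C : X -> Prop) (x : 'I_k.+1 -> X) n j :
  convex_set mu C -> (forall i, C (x i)) -> C (iter n (beta mu) x j).
Proof.
move=> C_convex C_x; elim: n j => [|n IHn] j //=.
by apply: C_convex => i; exact: IHn.
Qed.

Lemma iter_beta_const (c : X) n j :
  is_mean mu -> iter n (beta mu) (fun _ => c) j = c.
Proof.
move=> mu_mean; elim: n j => [|n IHn] j //=.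
rewrite /beta -[RHS]mu_mean; congr mu.
by apply: functional_extensionality => i; rewrite IHn.
Qed.

Context {d : X -> X -> R}.

Lemma iter_beta_uniformly_cauchy :
  weakly_beta_contractive d mu -> uniformly_locally_convex d mu ->
  forall x eps, 0 < eps -> exists N, forall m n i j, (N <= m)%nat -> (N <= n)%nat ->
    d (iter m (beta mu) x i) (iter n (beta mu) x j) < eps.
Proof.
move=> contractive ulc x eps eps_gt0.
have [delta [delta_gt0 hull_small]] := ulc eps eps_gt0.
have [N HN] := contractive x delta delta_gt0.
pose A z := exists j, z = iter N (beta mu) x j.
have A_small : diam_lt d A delta.
  exists (Defs.Delta d (iter N (beta mu) x)); split.
  - exact: Rle_lt_trans (Rle_abs _) (HN N (leqnn N)).
  - by move=> y z [i ->] [j ->]; apply: le_Delta.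
have [s [lt_s_eps hull_diam]] := hull_small A A_small.
have hull_iter m j : convex_hull mu A (iter (m + N) (beta mu) x j).
  rewrite iterD; apply: iter_beta_convex (convex_hull_convex A) _ => i.
  by apply: subset_convex_hull; exists i.
exists N => m n i j le_Nm le_Nn.
apply: Rle_lt_trans lt_s_eps.
by rewrite -(subnK le_Nm) -(subnK le_Nn); apply: hull_diam.
Qed.

Hypothesis d_metric : is_metric d.

Lemma power_convergent_of_ulc :
  complete d -> weakly_beta_contractive d mu -> uniformly_locally_convex d mu ->
  power_convergent d mu.
Proof.
move=> d_complete contractive ulc x.
have cauchy_x := iter_beta_uniformly_cauchy contractive ulc x.
have [l conv_0] : exists l, converges d (fun n => iter n (beta mu) x ord0) l.
  apply: d_complete => eps eps_gt0.
  have [N HN] := cauchy_x eps eps_gt0.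
  by exists N => m n le_Nm le_Nn; apply: HN.
exists l => j; apply: converges_close conv_0 _ => // eps eps_gt0.
have [N HN] := cauchy_x eps eps_gt0.
by exists N => n le_Nn; apply: HN.
Qed.

Lemma beta_extension_of_power_convergent :
  is_mean mu -> power_convergent d mu -> exists nu, beta_extension d mu nu.
Proof.
move=> mu_mean power_conv.
exists (fun x => proj1_sig (constructive_indefinite_description _ (power_conv x))).
split=> [c | x j]; case: (constructive_indefinite_description _ _) => l conv_l //=.
apply: (converges_const_eq d_metric) => eps /(conv_l ord0) [N HN].
by exists N => n /HN; rewrite iter_beta_const.
Qed.

End BarycentricOperator.

Theorem proposition3p9 (X : Type) (d : X -> X -> R) (k : nat)
  (mu : ('I_k -> X) -> X) :
  is_metric d -> complete d ->
  is_mean mu -> continuous_mean d mu ->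
  weakly_beta_contractive d mu ->
  uniformly_locally_convex d mu ->
  power_convergent d mu /\ exists nu, beta_extension d mu nu.
Proof.
move=> d_metric d_complete mu_mean _ contractive ulc.
have power_conv := power_convergent_of_ulc d_metric d_complete contractive ulc.
split=> //; exact: beta_extension_of_power_convergent.
Qed.
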